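(* Let $\mathbf{P}=\{p_n(x)\}_{n\ge0}$ be a sequence of complex polynomials with $\deg p_n=n$, $p_0=1$, and let $\bar{\mathbf{P}}=\{\bar p_n(x)\}$ with $\bar p_0(x)=1$, $\bar p_n(x)=xp_{n-1}(x)$ for $n\ge1$. Then for $n\ge2$ and $1\le k\le n-1$, $$A_{n,k}(\bar{\mathbf{P}})=(k+1)A_{n-1,k}(\mathbf{P})+(n-k)A_{n-1,k-1}(\mathbf{P}),$$ and for $n\ge1$, $A_{n,0}(\bar{\mathbf{P}})=\bar p_n(1)=A_{n-1,0}(\mathbf{P})=p_{n-1}(1)$.
   Context: For any sequence $\mathbf{Q}=\{q_n\}$ with $\deg q_n=n$, $q_0=1$, the Eulerian numbers $A_{n,k}(\mathbf{Q})$ ($0\le k\le n$) are the unique coefficients with $q_n(x)=\sum_{k=0}^{n}A_{n,k}(\mathbf{Q})\binom{x+n-k-1}{n}$, where $\binom{y}{n}=y(y-1)\cdots(y-n+1)/n!$. *)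

From HB Require Import structures.
From mathcomp Require Import all_boot all_order all_algebra.
From mathcomp Require Import complex.
From mathcomp Require Import reals.
From Stdlib Require Import ClassicalEpsilon.
Set Implicit Arguments. Unset Strict Implicit. Unset Printing Implicit Defensive.
Import Order.TTheory GRing.Theory Num.Theory.
Local Open Scope ring_scope.

Definition binomp (F : fieldType) (p : {poly F}) (n : nat) : {poly F} :=
  (n`!%:R)^-1 *: \prod_(i < n) (p - (i%:R)%:P).

(* binom(x + n - k - 1, n) as a polynomial in x (the shift n-k-1 may be -1) *)
Definition eulbasis (F : fieldType) (n k : nat) : {poly F} :=
  binomp ('X + ((n%:Z - k%:Z - 1)%:~R)%:P) n.

Definition eulerian_coeffs (F : fieldType) (q : {poly F}) (n : nat)
    (a : nat -> F) : Prop :=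
  q = \sum_(k < n.+1) a k *: eulbasis F n k /\ (forall k, (n < k)%N -> a k = 0).

(* A_{n,k}(Q) for a sequence Q : nat -> {poly F}: the (unique) coefficients
   of Q n in the basis binom(x+n-k-1, n), k = 0..n. *)
Definition eulerA (F : fieldType) (Q : nat -> {poly F}) (n k : nat) : F :=
  epsilon (inhabits (fun _ : nat => 0 : F)) (eulerian_coeffs (Q n) n) k.

Definition barseq (F : fieldType) (P : nat -> {poly F}) (n : nat) : {poly F} :=
  if n is m.+1 then 'X * P m else 1.

(* Write B(n,k) = binom(x+n-k-1, n).  Evaluated at x = j+1, B(n,k) vanishes for
   j < k and equals 1 for j = k, so the B(n,k), k <= n, are linearly independent
   and (by induction on the degree, using the two identities below) span the
   polynomials of degree <= n; hence the Eulerian numbers are well defined.  The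
   identities B(n,k) = B(n+1,k) - B(n+1,k+1) and
   x B(n,k) = (k+1) B(n+1,k) + (n-k) B(n+1,k+1) then transport the expansion of
   p_{n-1} into the expansion of x p_{n-1}, and B(n,k)(1) = [k = 0] reads off
   A_{n,0} as the value at 1. *)
From HB Require Import structures.
From mathcomp Require Import all_boot all_order all_algebra.
From mathcomp Require Import complex reals ring zify.
From Stdlib Require Import ClassicalEpsilon.
Set Implicit Arguments. Unset Strict Implicit. Unset Printing Implicit Defensive.
Import Order.TTheory GRing.Theory Num.Theory.
Local Open Scope ring_scope.

Section EulerianBasis.
Variable F : numFieldType.
Implicit Types (p q : {poly F}) (a : nat -> F).

Lemma binompS p n :
  binomp p n.+1 = (n.+1%:R)^-1 *: ((p - n%:R%:P) * binomp p n).
Proof.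
rewrite /binomp big_ord_recr /= factS natrM invfM -scalerA scalerAr mulrC.
by rewrite -scalerAl -scalerAr.
Qed.

Lemma binompD1S p n :
  binomp (p + 1) n.+1 = (n.+1%:R)^-1 *: ((p + 1) * binomp p n).
Proof.
rewrite /binomp big_ord_recl /= factS natrM invfM -scalerA scalerAr subr0.
rewrite (eq_bigr (fun i : 'I_n => p - (i%:R)%:P)) // => i _.
rewrite /bump /= add1n -addn1 natrD polyCD polyC1; ring.
Qed.

Definition eulshift (n k : nat) : {poly F} := 'X + ((n%:Z - k%:Z - 1)%:~R)%:P.

Lemma eulbasisE n k : eulbasis F n k = binomp (eulshift n k) n.
Proof. by []. Qed.

Lemma eulshiftS n k : eulshift n.+1 k = eulshift n k + 1.
Proof.
rewrite /eulshift -[RHS]addrA -polyC1 -polyCD; congr (_ + _%:P).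
by rewrite (_ : (1 : F) = (1 : int)%:~R) // -intrD; congr (_%:~R); lia.
Qed.

Lemma eulshiftSS n k : eulshift n.+1 k.+1 = eulshift n k.
Proof. by rewrite /eulshift; congr (_ + (_)%:P); congr (_%:~R); lia. Qed.

Lemma eulbasis_pascal n k :
  eulbasis F n k = eulbasis F n.+1 k - eulbasis F n.+1 k.+1.
Proof.
rewrite !eulbasisE eulshiftSS eulshiftS binompD1S binompS -scalerBr -mulrBl.
have -> : eulshift n k + 1 - (eulshift n k - (n%:R)%:P) = (n.+1%:R)%:P.
  by rewrite -natr1 polyCD polyC1; ring.
by rewrite mul_polyC scalerA mulVf ?scale1r // pnatr_eq0.
Qed.

Lemma mulX_eulbasis n k : (k <= n)%N ->
  'X * eulbasis F n k =
    k.+1%:R *: eulbasis F n.+1 k + (n - k)%:R *: eulbasis F n.+1 k.+1.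
Proof.
move=> le_kn; rewrite !eulbasisE eulshiftSS eulshiftS binompD1S binompS.
rewrite !scalerA ![_ * _^-1]mulrC -!scalerA -scalerDr !scalerAl -mulrDl.
have -> : k.+1%:R *: (eulshift n k + 1) + (n - k)%:R *: (eulshift n k - (n%:R)%:P)
          = n.+1%:R *: 'X.
  by rewrite /eulshift -!mul_polyC !polyC_natr rmorph_int natrB // -natr1; ring.
by rewrite -scalerAl scalerA mulVf ?scale1r // pnatr_eq0.
Qed.

Lemma horner_eulbasis n k j : (k <= n)%N ->
  (eulbasis F n k).[j.+1%:R] = (n`!%:R)^-1 * \prod_(i < n) ((j + n - k)%:R - i%:R).
Proof.
move=> le_kn; rewrite eulbasisE /binomp hornerZ horner_prod; congr (_ * _).
apply: eq_bigr => i _; rewrite /eulshift hornerD hornerN hornerD hornerX !hornerC.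
congr (_ - _).
have -> : ((j + n - k)%:R : F) = (j.+1%:Z + (n%:Z - k%:Z - 1))%:~R.
  by rewrite -[LHS]/(((j + n - k)%N%:Z)%:~R : F); congr (_%:~R); lia.
by rewrite [RHS]intrD.
Qed.

Lemma horner_eulbasis_lt n k j : (j < k <= n)%N -> (eulbasis F n k).[j.+1%:R] = 0.
Proof.
case/andP=> lt_jk le_kn; rewrite horner_eulbasis //.
have lt_n : (j + n - k < n)%N by lia.
by rewrite (bigD1 (Ordinal lt_n)) //= subrr mul0r mulr0.
Qed.

Lemma horner_eulbasis_diag n k : (k <= n)%N -> (eulbasis F n k).[k.+1%:R] = 1.
Proof.
move=> le_kn; rewrite horner_eulbasis // (_ : (k + n - k = n)%N); last by lia.
rewrite (eq_bigr (fun i : 'I_n => (n - i)%N%:R)); last first.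
  by move=> i _; rewrite natrB // ltnW.
by rewrite -natr_prod -ffact_prod ffactnn mulVf // pnatr_eq0 -lt0n fact_gt0.
Qed.

Lemma eulbasis_free n (c : nat -> F) :
  \sum_(k < n.+1) c k *: eulbasis F n k = 0 -> forall k, (k <= n)%N -> c k = 0.
Proof.
move=> sum0; elim/ltn_ind => j IHj le_jn.
have := congr1 (horner^~ j.+1%:R) sum0.
rewrite horner0 horner_sum (bigD1 (Ordinal (le_jn : (j < n.+1)%N))) //=.
rewrite hornerZ horner_eulbasis_diag // mulr1 big1 ?addr0 // => i /eqP neq_ij.
have le_in : (i <= n)%N by rewrite -ltnS.
rewrite hornerZ; case: (ltngtP i j) => [lt_ij|lt_ji|eq_ij].
- by rewrite IHj ?mul0r.
- by rewrite horner_eulbasis_lt ?mulr0 // lt_ji.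
- by case: neq_ij; apply: val_inj.
Qed.

Definition eulspan n q :=
  exists a, q = \sum_(k < n.+1) a k *: eulbasis F n k.

Lemma eulspan0 n : eulspan n 0.
Proof. by exists (fun=> 0); rewrite big1 // => i _; rewrite scale0r. Qed.

Lemma eulspanD n p q : eulspan n p -> eulspan n q -> eulspan n (p + q).
Proof.
move=> [a ->] [b ->]; exists (fun k => a k + b k).
by rewrite -big_split; apply: eq_bigr => i _; rewrite scalerDl.
Qed.

Lemma eulspanZ n c q : eulspan n q -> eulspan n (c *: q).
Proof.
move=> [a ->]; exists (fun k => c * a k).
by rewrite scaler_sumr; apply: eq_bigr => i _; rewrite scalerA.
Qed.

Lemma eulspan_sum n m (f : 'I_m -> {poly F}) :
  (forall i, eulspan n (f i)) -> eulspan n (\sum_(i < m) f i).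
Proof. by move=> span_f; apply: big_ind; [apply: eulspan0|apply: eulspanD|]. Qed.

Lemma eulspan_eulbasis n k : (k <= n)%N -> eulspan n (eulbasis F n k).
Proof.
move=> le_kn; exists (fun i => (i == k)%:R).
rewrite (bigD1 (Ordinal (le_kn : (k < n.+1)%N))) //= eqxx scale1r big1 ?addr0 //.
move=> i /eqP neq_ik; case: eqP => [eq_ik|_]; last by rewrite scale0r.
by case: neq_ik; apply: val_inj.
Qed.

Lemma eulspan_eulbasisS n k : (k <= n)%N ->
  eulspan n.+1 (eulbasis F n.+1 k) /\ eulspan n.+1 (eulbasis F n.+1 k.+1).
Proof. by move=> le_kn; split; apply: eulspan_eulbasis; rewrite ?ltnS ?leqW. Qed.

Lemma eulspanS n q : eulspan n q -> eulspan n.+1 q.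
Proof.
move=> [a ->]; apply: eulspan_sum => i; apply: eulspanZ.
have [span_k span_k1] := eulspan_eulbasisS (ltn_ord i : (i <= n)%N).
by rewrite eulbasis_pascal -scaleN1r; apply: eulspanD => //; apply: eulspanZ.
Qed.

Lemma eulspan_mulX n q : eulspan n q -> eulspan n.+1 ('X * q).
Proof.
move=> [a ->]; rewrite mulr_sumr; apply: eulspan_sum => i.
have [span_k span_k1] := eulspan_eulbasisS (ltn_ord i : (i <= n)%N).
rewrite -scalerAr (mulX_eulbasis (ltn_ord i : (i <= n)%N)).
by apply: eulspanZ; apply: eulspanD; apply: eulspanZ.
Qed.

Lemma eulspan_size n q : (size q <= n.+1)%N -> eulspan n q.
Proof.
elim: n q => [|n IHn] q size_q.
  exists (fun=> q`_0); rewrite big_ord1 eulbasisE /binomp big_ord0 /=.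
  by rewrite invr1 scale1r alg_polyC; apply: size1_polyC.
rewrite -(poly_take_drop 1 q) expr1 mulrC; apply: eulspanD.
  by apply/eulspanS/IHn; apply: leq_trans (size_take_poly _ _) _.
by apply/eulspan_mulX/IHn; rewrite size_drop_poly; lia.
Qed.

Lemma eulerian_coeffs_exists n q :
  (size q <= n.+1)%N -> exists a, eulerian_coeffs q n a.
Proof.
move=> /eulspan_size [a ->]; exists (fun k => if (k <= n)%N then a k else 0).
split; first by apply: eq_bigr => i _; rewrite (ltn_ord i : (i <= n)%N).
by move=> k; rewrite ltnNge => /negbTE ->.
Qed.

Lemma eulerian_coeffs_unique n q a b :
  eulerian_coeffs q n a -> eulerian_coeffs q n b -> a =1 b.
Proof.
move=> [qa a0] [qb b0] k; have [le_kn|lt_nk] := leqP k n; last by rewrite a0 ?b0.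
apply/eqP; rewrite -subr_eq0; apply/eqP.
apply: (@eulbasis_free n (fun i => a i - b i)) le_kn.
by under eq_bigr do rewrite scalerBl; rewrite sumrB -qa -qb subrr.
Qed.

Lemma eulerA_coeffs (Q : nat -> {poly F}) n :
  (size (Q n) <= n.+1)%N -> eulerian_coeffs (Q n) n (eulerA Q n).
Proof.
by move=> /eulerian_coeffs_exists; apply: (epsilon_spec (inhabits (fun=> 0))).
Qed.

Lemma eulerA_eq (Q : nat -> {poly F}) n a : (size (Q n) <= n.+1)%N ->
  eulerian_coeffs (Q n) n a -> eulerA Q n =1 a.
Proof. by move=> /eulerA_coeffs; apply: eulerian_coeffs_unique. Qed.

Lemma horner1_eulerian_coeffs n q a : eulerian_coeffs q n a -> q.[1] = a 0%N.
Proof.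
move=> [-> _]; rewrite -[1]/(0%N.+1%:R) horner_sum big_ord_recl /= hornerZ.
rewrite horner_eulbasis_diag // mulr1 big1 ?addr0 // => i _.
by rewrite hornerZ horner_eulbasis_lt ?mulr0 //= -ltnS.
Qed.

Definition mulX_coeffs n a k : F :=
  k.+1%:R * a k + (if k is k'.+1 then (n - k')%:R * a k' else 0).

Lemma eulerian_coeffs_mulX n q a :
  eulerian_coeffs q n a -> eulerian_coeffs ('X * q) n.+1 (mulX_coeffs n a).
Proof.
move=> [-> a0]; split; last first.
  by move=> [|k] lt_nk; rewrite /mulX_coeffs !a0 ?mulr0 ?addr0 //; lia.
rewrite mulr_sumr (eq_bigr (fun i : 'I_n.+1 =>
   (i.+1%:R * a i) *: eulbasis F n.+1 i
   + ((n - i)%:R * a i) *: eulbasis F n.+1 i.+1)); last first.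
  move=> i _; rewrite -scalerAr (mulX_eulbasis (ltn_ord i : (i <= n)%N)).
  by rewrite scalerDr !scalerA ![a i * _]mulrC.
rewrite big_split /=; under [RHS]eq_bigr do rewrite scalerDl.
rewrite big_split /=; congr (_ + _).
  by rewrite [RHS]big_ord_recr /= a0 // mulr0 scale0r addr0.
by rewrite [RHS]big_ord_recl /= scale0r add0r.
Qed.

End EulerianBasis.

Lemma size_barseq (F : fieldType) (P : nat -> {poly F}) :
  (forall n, size (P n) = n.+1) -> forall n, size (barseq P n) = n.+1.
Proof.
by move=> sizeP [|n] /=; rewrite ?size_poly1 // mulrC size_mulX -?size_poly_eq0 sizeP.
Qed.

Theorem theorem3p3 (R : realType) (P : nat -> {poly R[i]})
  (hdeg : forall n, size (P n) = n.+1) (h0 : P 0%N = 1) :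
  (forall n k, (2 <= n)%N -> (1 <= k)%N -> (k <= n.-1)%N ->
     eulerA (barseq P) n k =
       (k.+1)%:R * eulerA P n.-1 k + (n - k)%:R * eulerA P n.-1 k.-1) /\
  (forall n, (1 <= n)%N ->
     eulerA (barseq P) n 0 = (barseq P n).[1] /\
     (barseq P n).[1] = eulerA P n.-1 0 /\
     eulerA P n.-1 0 = (P n.-1).[1]).
Proof.
have sizeP m : (size (P m) <= m.+1)%N by rewrite hdeg.
have sizePbar m : (size (barseq P m) <= m.+1)%N by rewrite size_barseq.
have coeffsP m := eulerA_coeffs (sizeP m).
have coeffsPbar m : eulerian_coeffs (barseq P m.+1) m.+1 (mulX_coeffs m (eulerA P m)).
  exact: eulerian_coeffs_mulX.
split=> [[|m] [|k] //= _ _ _|[|m] //= _].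
  by rewrite (eulerA_eq (sizePbar _) (coeffsPbar m)).
have horner1P : (P m).[1] = eulerA P m 0 := horner1_eulerian_coeffs (coeffsP m).
rewrite hornerM hornerX mul1r horner1P (eulerA_eq (sizePbar _) (coeffsPbar m)).
by rewrite /mulX_coeffs mul1r addr0; do !split.
Qed.
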